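(* Let $\mathcal D$ be any family of dependency notions and let $\phi\in\mathbf{FO}(\mathcal D,[\cdot])$. Then $\phi$ is logically equivalent to some formula of the form $\bigwedge_i[\theta_i]\wedge\psi$, where the $\theta_i$ are first-order sentences and $\psi\in\mathbf{FO}(\mathcal D)$.
   Context: Team semantics (lax version). For a structure $\mathfrak M$ with domain $M$, a team $X$ is a (possibly empty) set of assignments $s:V\to M$, $V$ a finite set of variables; $X(\vec v)=\{s(\vec v):s\in X\}$. Satisfaction for formulas in negation normal form: first-order literal $\alpha$: every $s\in X$ satisfies $\alpha$ (Tarski); $\psi\vee\theta$: $X=Y\cup Z$ with $\mathfrak M\models_Y\psi$, $\mathfrak M\models_Z\theta$; $\psi\wedge\theta$: both; $\exists v\psi$: some $F:X\to\mathcal P(M)\setminus\{\emptyset\}$ with $\mathfrak M\models_{X[F/v]}\psi$, $X[F/v]=\{s[m/v]:s\in X,m\in F(s)\}$; $\forall v\psi$: $\mathfrak M\models_{X[M/v]}\psi$, $X[M/v]=\{s[m/v]:s\in X,m\in M\}$. A $k$-ary dependency notion $\mathbf D$ is an isomorphism-closed class of structures $(M,R)$, $R$ $k$-ary; $\mathfrak M\models_X\mathbf D\vec v$ iff $(M,X(\vec v))\in\mathbf D$. For a first-order sentence $\theta$ in the signature of $\mathfrak M$, $\mathfrak M\models_X[\theta]$ iff $\mathfrak M\models\theta$ in Tarski semantics. $\mathbf{FO}(\mathcal D,[\cdot])$ is first-order logic in negation normal form extended with the atoms of $\mathcal D$ and the operator $[\cdot]$. Two formulas are equivalent if satisfied by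 the same teams in all structures. *)

From mathcomp Require Import all_boot.
Set Implicit Arguments.
Unset Strict Implicit.
Unset Printing Implicit Defensive.

Record signature := Signature {
  fsym : Type;
  farity : fsym -> nat;
  rsym : Type;
  rarity : rsym -> nat }.

Record structure (L : signature) := Structure {
  dom :> Type;
  dom_inhabited : inhabited dom;
  funI : forall f : fsym L, ('I_(farity f) -> dom) -> dom;
  relI : forall r : rsym L, ('I_(rarity r) -> dom) -> Prop }.

Section Syntax.
Variable L : signature.

Inductive term : Type :=
| Var : nat -> term
| App : forall f : fsym L, ('I_(farity f) -> term) -> term.

Inductive literal : Type :=
| LEq : term -> term -> literal
| LNeq : term -> term -> literal
| LRel : forall r : rsym L, ('I_(rarity r) -> term) -> literal
| LNRel : forall r : rsym L, ('I_(rarity r) -> term) -> literal.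

Inductive fo : Type :=
| FLit : literal -> fo
| FAnd : fo -> fo -> fo
| FOr : fo -> fo -> fo
| FEx : nat -> fo -> fo
| FAll : nat -> fo -> fo.

Fixpoint term_vars_in (P : nat -> Prop) (t : term) : Prop :=
  match t with
  | Var x => P x
  | App f args => forall j, term_vars_in P (args j)
  end.

Definition lit_vars_in (P : nat -> Prop) (l : literal) : Prop :=
  match l with
  | LEq t1 t2 | LNeq t1 t2 => term_vars_in P t1 /\ term_vars_in P t2
  | LRel r args | LNRel r args => forall j, term_vars_in P (args j)
  end.

Fixpoint fo_vars_in (P : nat -> Prop) (θ : fo) : Prop :=
  match θ with
  | FLit l => lit_vars_in P l
  | FAnd a b | FOr a b => fo_vars_in P a /\ fo_vars_in P b
  | FEx v a | FAll v a => fo_vars_in (fun x => x = v \/ P x) a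
  end.

Definition sentence (θ : fo) : Prop := fo_vars_in (fun _ => False) θ.

End Syntax.

Definition upd {M : Type} (s : nat -> M) (v : nat) (m : M) : nat -> M :=
  fun x => if x == v then m else s x.

Section Tarski.
Variables (L : signature) (M : structure L).

Fixpoint eval (s : nat -> M) (t : term L) : M :=
  match t with
  | Var x => s x
  | App f args => @funI L M f (fun j => eval s (args j))
  end.

Definition lit_sat (s : nat -> M) (l : literal L) : Prop :=
  match l with
  | LEq t1 t2 => eval s t1 = eval s t2
  | LNeq t1 t2 => eval s t1 <> eval s t2
  | LRel r args => @relI L M r (fun j => eval s (args j))
  | LNRel r args => ~ @relI L M r (fun j => eval s (args j))
  end.

Fixpoint tarski (s : nat -> M) (θ : fo L) : Prop :=
  match θ with
  | FLit l => lit_sat s l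
  | FAnd a b => tarski s a /\ tarski s b
  | FOr a b => tarski s a \/ tarski s b
  | FEx v a => exists m : M, tarski (upd s v m) a
  | FAll v a => forall m : M, tarski (upd s v m) a
  end.

Definition models (θ : fo L) : Prop := forall s : nat -> M, tarski s θ.

End Tarski.

(* A k-ary dependency notion: an isomorphism-closed class of structures (M, R)
   with R a k-ary relation on M (R given as a predicate on k-tuples 'I_k -> M). *)
Record depnotion := DepNotion {
  dep_arity : nat;
  dep_class : forall M : Type, (('I_dep_arity -> M) -> Prop) -> Prop;
  dep_iso : forall (M N : Type) (f : M -> N) (g : N -> M),
      cancel f g -> cancel g f ->
      forall R : ('I_dep_arity -> M) -> Prop,
        dep_class R -> dep_class (fun t : 'I_dep_arity -> N => R (g \o t)) }.

Section TeamLogic.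
Variables (L : signature) (Idx : Type) (D : Idx -> depnotion).

Inductive tform : Type :=
| TLit : literal L -> tform
| TDep : forall i : Idx, ('I_(dep_arity (D i)) -> nat) -> tform
| TBr : fo L -> tform
| TOr : tform -> tform -> tform
| TAnd : tform -> tform -> tform
| TEx : nat -> tform -> tform
| TAll : nat -> tform -> tform.

Fixpoint brackets_sentences (φ : tform) : Prop :=
  match φ with
  | TLit _ | TDep _ _ => True
  | TBr θ => sentence θ
  | TOr a b | TAnd a b => brackets_sentences a /\ brackets_sentences b
  | TEx _ a | TAll _ a => brackets_sentences a
  end.

Fixpoint bracket_free (φ : tform) : Prop :=
  match φ with
  | TLit _ | TDep _ _ => True
  | TBr _ => False
  | TOr a b | TAnd a b => bracket_free a /\ bracket_free b
  | TEx _ a | TAll _ a => bracket_free a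
  end.

(* lax team semantics; a team is a set of assignments *)
Fixpoint tsat (M : structure L) (φ : tform) : ((nat -> M) -> Prop) -> Prop :=
  match φ with
  | TLit l => fun X => forall s, X s -> lit_sat s l
  | TDep i vs => fun X =>
      dep_class (fun t : 'I_(dep_arity (D i)) -> M =>
                   exists s, X s /\ t = (fun j => s (vs j)))
  | TBr θ => fun _ => models M θ
  | TOr a b => fun X =>
      exists Y Z : (nat -> M) -> Prop,
        (forall s, X s <-> Y s \/ Z s) /\ tsat a Y /\ tsat b Z
  | TAnd a b => fun X => tsat a X /\ tsat b X
  | TEx v a => fun X =>
      exists F : (nat -> M) -> M -> Prop,
        (forall s, X s -> exists m, F s m) /\
        tsat a (fun s' => exists s m, X s /\ F s m /\ s' = upd s v m)
  | TAll v a => fun X =>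
      tsat a (fun s' => exists s (m : M), X s /\ s' = upd s v m)
  end.

Definition tequiv (φ ψ : tform) : Prop :=
  forall (M : structure L) (X : (nat -> M) -> Prop), tsat (M:=M) φ X <-> tsat (M:=M) ψ X.

Definition bracket_conj (thetas : seq (fo L)) (ψ : tform) : tform :=
  foldr (fun θ acc => TAnd (TBr θ) acc) ψ thetas.

End TeamLogic.

Fixpoint all_sentences (L : signature) (thetas : seq (fo L)) : Prop :=
  match thetas with
  | [::] => True
  | θ :: rest => sentence θ /\ all_sentences rest
  end.

(* A bracket [θ] is satisfied by a team iff M |= θ, independently of the team.
   Hence every bracket can be replaced by a trivially true atom and its sentence
   moved to an outer conjunction: conjunction, both quantifiers and (lax) split
   disjunction commute with conjoining a team-independent condition. *)

From mathcomp Require Import all_boot.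
From Stdlib Require Import Setoid.
Set Implicit Arguments.
Unset Strict Implicit.
Unset Printing Implicit Defensive.

Section BracketNormalForm.
Variables (L : signature) (Idx : Type) (D : Idx -> depnotion).

Definition models_all (M : structure L) (ts : seq (fo L)) : Prop :=
  foldr (fun θ P => models M θ /\ P) True ts.

Lemma models_all_cat (M : structure L) (ts ts' : seq (fo L)) :
  models_all M (ts ++ ts') <-> models_all M ts /\ models_all M ts'.
Proof. by elim: ts => [|θ ts IH] /=; [tauto | rewrite IH; tauto]. Qed.

Lemma all_sentences_cat (ts ts' : seq (fo L)) :
  all_sentences ts -> all_sentences ts' -> all_sentences (ts ++ ts').
Proof. by elim: ts => [|θ ts IH] //= [? ?] ?; split; auto. Qed.

Lemma tsat_bracket_conj (M : structure L) (ts : seq (fo L)) (ψ : tform L D) X :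
  tsat (M:=M) (bracket_conj ts ψ) X <-> models_all M ts /\ tsat (M:=M) ψ X.
Proof. by elim: ts => [|θ ts IH] /=; [tauto | rewrite IH; tauto]. Qed.

(* The atom x0 = x0 holds in every team, the empty team included. *)
Definition ttrue : tform L D := TLit D (LEq (Var L 0) (Var L 0)).

Fixpoint brackets (φ : tform L D) : seq (fo L) :=
  match φ with
  | TLit _ | TDep _ _ => [::]
  | TBr θ => [:: θ]
  | TOr a b | TAnd a b => brackets a ++ brackets b
  | TEx _ a | TAll _ a => brackets a
  end.

Fixpoint strip_brackets (φ : tform L D) : tform L D :=
  match φ with
  | TLit _ | TDep _ _ => φ
  | TBr _ => ttrue
  | TOr a b => TOr (strip_brackets a) (strip_brackets b)
  | TAnd a b => TAnd (strip_brackets a) (strip_brackets b)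
  | TEx v a => TEx v (strip_brackets a)
  | TAll v a => TAll v (strip_brackets a)
  end.

Lemma all_sentences_brackets (φ : tform L D) :
  brackets_sentences φ -> all_sentences (brackets φ).
Proof.
by elim: φ => //= [a IHa b IHb | a IHa b IHb] [? ?];
  exact: all_sentences_cat (IHa _) (IHb _).
Qed.

Lemma bracket_free_strip (φ : tform L D) : bracket_free (strip_brackets φ).
Proof. by elim: φ => //= *; split. Qed.

Lemma tsat_strip_brackets (M : structure L) (φ : tform L D) X :
  tsat (M:=M) φ X <-> models_all M (brackets φ) /\ tsat (M:=M) (strip_brackets φ) X.
Proof.
elim: φ X => /= [l | i vs | θ | a IHa b IHb | a IHa b IHb | v a IHa | v a IHa] X.
- by tauto.
- by tauto.
- by split=> [? | [[]]] //; do !split.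
- rewrite models_all_cat; split.
  + move=> [Y [Z [HX [/IHa [? ?] /IHb [? ?]]]]].
    by do !split=> //; exists Y, Z.
  + move=> [[? ?] [Y [Z [HX [? ?]]]]].
    by exists Y, Z; rewrite IHa IHb.
- by rewrite IHa IHb models_all_cat; tauto.
- split.
  + by move=> [F [HF /IHa [? ?]]]; split=> //; exists F.
  + by move=> [? [F [HF ?]]]; exists F; rewrite IHa.
- by rewrite IHa.
Qed.

End BracketNormalForm.

Theorem mainTheorem13 (L : signature) (Idx : Type) (D : Idx -> depnotion)
    (φ : tform L D) :
  brackets_sentences φ ->
  exists (thetas : seq (fo L)) (ψ : tform L D),
    all_sentences thetas /\ bracket_free ψ /\
    tequiv φ (bracket_conj thetas ψ).
Proof.
move=> φ_sentences; exists (brackets φ), (strip_brackets φ).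
split; first exact: all_sentences_brackets.
split; first exact: bracket_free_strip.
by move=> M X; rewrite tsat_bracket_conj tsat_strip_brackets.
Qed.
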